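(* Let $p\ge1$, $\phi_1,\dots,\phi_p:\mathbb Z\to\mathbb C$, $v:\mathbb Z\to\mathbb C$ and integers $t>s$. Then $$\sum_{j=1}^{t-s}H(t,s+j)\,v_{s+j}=\det M,$$ where $M$ is the $(t-s)\times(t-s)$ matrix obtained from $\Phi_{t,s}$ by replacing its first column with $(v_{s+1},v_{s+2},\dots,v_t)^{T}$.
   Context: $\Gamma_t$ is the $p\times p$ companion matrix with first row $(\phi_1(t),\dots,\phi_p(t))$, entries $(i,i-1)$ equal to $1$ for $2\le i\le p$, other entries $0$. For $t>u$ the Green's function $H(t,u)$ is the $(1,1)$ entry of $\Gamma_t\Gamma_{t-1}\cdots\Gamma_{u+1}$, and $H(u,u)=1$. Convention: $\phi_l=0$ for $l>p$. For $t>s$, $\Phi_{t,s}$ is the $(t-s)\times(t-s)$ matrix with $(i,j)$ entry $-1$ if $j=i+1$, $\phi_{i-j+1}(s+i)$ if $1\le j\le i$, $0$ if $j>i+1$. *)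

From mathcomp Require Import all_boot all_order all_algebra.
Set Implicit Arguments. Unset Strict Implicit. Unset Printing Implicit Defensive.
Import Order.TTheory GRing.Theory Num.Theory.
Local Open Scope ring_scope.

(* Coefficients phi_1..phi_p given as phi : nat -> int -> R; convention
   phi_l = 0 for l > p (and the unused index l = 0 is also set to 0). *)
Definition coefp (R : comNzRingType) (p : nat) (phi : nat -> int -> R)
    (l : nat) (t : int) : R :=
  if (0 < l <= p)%N then phi l t else 0.

(* Companion matrix Gamma_t, of size p (written p.-1.+1; equal to p when p >= 1).
   0-indexed: row 0 is (phi_1(t),...,phi_p(t)); entry (i,i-1) = 1 for i >= 1. *)
Definition Gamma (R : comNzRingType) (p : nat) (phi : nat -> int -> R) (t : int)
    : 'M[R]_(p.-1.+1) :=
  \matrix_(i, j) (if i == ord0 then coefp p phi j.+1 t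
                  else if (i == j.+1 :> nat) then 1 else 0).

(* Green's function: H(t,u) = (1,1) entry of Gamma_t Gamma_{t-1} ... Gamma_{u+1}
   for t > u, and H(u,u) = 1 (empty product).  Value for t < u unused (0). *)
Definition Hgreen (R : comNzRingType) (p : nat) (phi : nat -> int -> R)
    (t u : int) : R :=
  if u <= t then
    (\prod_(k < `|t - u|%N) Gamma p phi (t - k%:Z)) ord0 ord0
  else 0.

(* Phi_{t,s}, an n x n matrix with n = t - s; 1-indexed entry (i,j):
   -1 if j = i+1, phi_{i-j+1}(s+i) if j <= i, 0 otherwise.
   Below i, j are 0-indexed, so the 1-indexed ones are i+1, j+1. *)
Definition PhiMat (R : comNzRingType) (p : nat) (phi : nat -> int -> R)
    (t s : int) : 'M[R]_(`|t - s|%N) :=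
  \matrix_(i, j)
    (if (j == i.+1 :> nat) then -1
     else if (j <= i)%N then coefp p phi (i - j).+1 (s + (i.+1)%:Z)
     else 0).

Definition Mrepl (R : comNzRingType) (p : nat) (phi : nat -> int -> R)
    (v : int -> R) (t s : int) : 'M[R]_(`|t - s|%N) :=
  \matrix_(i, j) (if (j == 0 :> nat) then v (s + (i.+1)%:Z)
                  else PhiMat p phi t s i j).

(* Put N = t - s and h_i = H(t, s+i+1) for i < N, so that h_(N-1) = 1.  The matrix M is
   lower Hessenberg with -1 on its superdiagonal.  Peeling off the last factor of
   Gamma_t ... Gamma_(u+1) gives the recursion H(t,u) = sum_(l=1)^(t-u) phi_l(u+l) H(t,u+l),
   which says exactly that the row vector h annihilates every column of M but the first.
   Adding to the last row of M the h-combination of all rows therefore leaves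
   sum_i h_i v_(s+i+1) as its only nonzero entry, and the complementary minor is
   triangular with determinant (-1)^(N-1), which cancels the cofactor sign. *)

From Pilot Require Import Defs.
From mathcomp Require Import all_boot all_order all_algebra zify.
Import Order.TTheory GRing.Theory Num.Theory.
Set Implicit Arguments. Unset Strict Implicit. Unset Printing Implicit Defensive.
Local Open Scope ring_scope.

Section HessenbergDeterminant.

Variables (R : comNzRingType) (n : nat) (a : nat -> nat -> R).
Hypothesis a_super : forall i, a i i.+1 = -1.
Hypothesis a_above : forall i j, (i.+1 < j)%N -> a i j = 0.

Let A : 'M[R]_n.+1 := \matrix_(i, j) a i j.

Lemma cofactor_hessenberg : cofactor A ord_max ord0 = 1.
Proof.
rewrite /cofactor det_trig; last first.
  apply/forallP => i; apply/forallP => k; apply/implyP => lt_ik.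
  by rewrite !mxE lift_max lift0 a_above.
rewrite (eq_bigr (fun=> -1 : R)) => [|i _]; last first.
  by rewrite !mxE lift_max lift0 a_super.
by rewrite prodr_const card_ord addn0 -exprD -signr_odd addnn odd_double.
Qed.

Variable h : nat -> R.

Lemma sum_hessenberg_col j : (j < n)%N ->
  \sum_(i < n.+1) h i * a i j.+1 = \sum_(j.+1 <= i < n.+1) h i * a i j.+1 - h j.
Proof.
move=> lt_jn; have le_jn : (j <= n)%N := ltnW lt_jn.
rewrite -(big_mkord xpredT (fun i => h i * a i j.+1)) (big_cat_nat (n := j)) ?leqW //=.
rewrite big_nat big1 => [|i /andP[_ lt_ij]]; last by rewrite a_above ?mulr0.
by rewrite add0r big_ltn // a_super mulrN1 addrC.
Qed.

Lemma det_hessenberg : h n = 1 ->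
    (forall j, (j < n)%N -> h j = \sum_(j.+1 <= i < n.+1) h i * a i j.+1) ->
  \det A = \sum_(i < n.+1) h i * a i 0.
Proof.
move=> h_n h_rec.
pose L : 'M[R]_n.+1 := \matrix_(i, k) (if i == ord_max then h k else (i == k)%:R).
have det_L : \det L = 1.
  rewrite det_trig; last first.
    apply/forallP => i; apply/forallP => k; apply/implyP => lt_ik; rewrite mxE.
    case: ifP => [/eqP i_max|_]; last by rewrite -val_eqE (ltn_eqF lt_ik).
    by move: lt_ik; rewrite i_max /= ltnNge -ltnS ltn_ord.
  rewrite (bigD1 ord_max) //= big1 => [|i /negbTE ne_i]; rewrite mxE ?eqxx ?ne_i //.
  by rewrite h_n mulr1.
rewrite -[\det A]mul1r -det_L -det_mulmx (expand_det_row _ ord_max).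
rewrite (bigD1 ord0) //= big1 ?addr0 => [|k nz_k].
  have -> : cofactor (L *m A) ord_max ord0 = cofactor A ord_max ord0.
    congr (_ * _); congr (\det _); apply/matrixP => i k.
    rewrite !mxE (bigD1 (lift ord_max i)) //= big1 ?addr0 => [|l ne_l].
      by rewrite /L !mxE lift_eqF eqxx mul1r.
    by rewrite /L mxE lift_eqF eq_sym (negbTE ne_l) mul0r.
  rewrite cofactor_hessenberg mulr1 mxE; apply: eq_bigr => i _.
  by rewrite !mxE eqxx.
rewrite mxE (eq_bigr (fun i : 'I_n.+1 => h i * a i k)) => [|i _]; last first.
  by rewrite !mxE eqxx.
case: k nz_k => [[|j] //= lt_jn] _.
by rewrite sum_hessenberg_col // -h_rec // subrr mul0r.
Qed.

End HessenbergDeterminant.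

Section GreenFunction.

Variables (R : comNzRingType) (p : nat) (phi : nat -> int -> R).

Lemma coefp_gt l u : (p < l)%N -> Defs.coefp p phi l u = 0.
Proof. by move=> lt_pl; rewrite /Defs.coefp ifF // (leqNgt l) lt_pl andbF. Qed.

Lemma row0_mulmx_Gamma (M : 'M[R]_p.-1.+1) u (c : 'I_p.-1.+1) :
  (M *m Gamma p phi u) ord0 c = M ord0 ord0 * Defs.coefp p phi c.+1 u
    + (if (c.+1 < p.-1.+1)%N then M ord0 (inord c.+1) else 0).
Proof.
rewrite mxE big_ord_recl mxE eqxx; congr (_ + _).
case: ifP => [lt_c | ge_c].
  rewrite (bigD1 (Ordinal (lt_c : (c < p.-1)%N))) //= big1 ?addr0 => [|k ne_k].
    rewrite mxE /= eqxx mulr1; congr (M _ _); apply: val_inj; rewrite /= inordK //.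
  by rewrite mxE /= eqSS ifF ?mulr0 //; exact: negbTE ne_k.
rewrite big1 // => k _; rewrite mxE /= eqSS ifF ?mulr0 //.
by apply: contraFF ge_c => /eqP <-; rewrite ltnS.
Qed.

Definition Gamma_prod (t : int) m : 'M[R]_p.-1.+1 :=
  \prod_(k < m) Gamma p phi (t - k%:Z).

Lemma Gamma_prodS t m : Gamma_prod t m.+1 = Gamma_prod t m *m Gamma p phi (t - m%:Z).
Proof. by rewrite /Gamma_prod big_ord_recr mulmxE. Qed.

Lemma row0_Gamma_prod t m (c : 'I_p.-1.+1) :
  Gamma_prod t m.+1 ord0 c = \sum_(l < m.+1)
    Defs.coefp p phi (c + l).+1 (t - m%:Z + l%:Z) * Gamma_prod t (m - l) ord0 ord0.
Proof.
elim: m c => [|m IHm] c.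
  rewrite /Gamma_prod !big_ord1 big_ord0 !mxE eqxx mulr1 addn0.
  by congr (Defs.coefp _ _ _ _); rewrite /=; lia.
rewrite Gamma_prodS row0_mulmx_Gamma big_ord_recl addn0 subn0 addr0 mulrC; congr (_ + _).
case: ifP => [lt_c | ge_c].
  rewrite IHm inordK //; apply: eq_bigr => l _.
  rewrite lift0 subSS; congr (Defs.coefp _ _ _ _ * _); lia.
rewrite big1 // => l _; rewrite lift0 coefp_gt ?mul0r //.
by move/negbT: ge_c; have := leqSpred p; lia.
Qed.

Lemma Hgreen_Gamma_prod t m : Hgreen p phi t (t - m%:Z) = Gamma_prod t m ord0 ord0.
Proof.
by rewrite /Hgreen ifT; [have -> : absz (t - (t - m%:Z))%R = m by lia | lia].
Qed.

Lemma Hgreen_id t : Hgreen p phi t t = 1.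
Proof. by rewrite -[t in Hgreen _ _ _ t]subr0 Hgreen_Gamma_prod /Gamma_prod big_ord0 mxE. Qed.

Lemma Hgreen_rec u n :
  Hgreen p phi (u + n.+1%:Z) u = \sum_(l < n.+1)
    Defs.coefp p phi l.+1 (u + l.+1%:Z) * Hgreen p phi (u + n.+1%:Z) (u + l.+1%:Z).
Proof.
move tE: (u + n.+1%:Z) => t.
have -> : u = t - n.+1%:Z by lia.
rewrite Hgreen_Gamma_prod row0_Gamma_prod; apply: eq_bigr => l _.
have le_ln : (l <= n)%N by rewrite -ltnS.
have -> : t - n.+1%:Z + l.+1%:Z = t - (n - l)%:Z by lia.
by rewrite Hgreen_Gamma_prod add0n; congr (Defs.coefp _ _ _ _ * _); lia.
Qed.

End GreenFunction.

Section ReplacedPhiMatrix.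

Variables (R : comNzRingType) (p : nat) (phi : nat -> int -> R) (v : int -> R) (s : int).

Definition Mrepl_entry (i j : nat) : R :=
  if j == 0%N then v (s + i.+1%:Z)
  else if j == i.+1 then -1
  else if (j <= i)%N then Defs.coefp p phi (i - j).+1 (s + i.+1%:Z) else 0.

Lemma Mrepl_entry_super i : Mrepl_entry i i.+1 = -1.
Proof. by rewrite /Mrepl_entry eqxx. Qed.

Lemma Mrepl_entry_above i j : (i.+1 < j)%N -> Mrepl_entry i j = 0.
Proof.
move=> lt_ij; rewrite /Mrepl_entry gtn_eqF ?(ltn_trans _ lt_ij) // gtn_eqF //.
by rewrite leqNgt (ltn_trans _ lt_ij).
Qed.

Lemma Mrepl_entry_below i j : (0 < j <= i)%N ->
  Mrepl_entry i j = Defs.coefp p phi (i - j).+1 (s + i.+1%:Z).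
Proof.
by case/andP=> j_gt0 le_ji; rewrite /Mrepl_entry gtn_eqF // ltn_eqF ?ltnS // le_ji.
Qed.

Lemma Hgreen_Mrepl_col_rec n j : (j < n)%N ->
  Hgreen p phi (s + n.+1%:Z) (s + j.+1%:Z)
  = \sum_(j.+1 <= i < n.+1) Hgreen p phi (s + n.+1%:Z) (s + i.+1%:Z) * Mrepl_entry i j.+1.
Proof.
move=> lt_jn; rewrite (big_addn 0 _ j.+1) subSS -(subnSK lt_jn) big_mkord.
have -> : s + n.+1%:Z = (s + j.+1%:Z) + (n - j.+1).+1%:Z by lia.
rewrite Hgreen_rec; apply: eq_bigr => l _.
rewrite mulrC Mrepl_entry_below ?leq_addl // addnK.
by have -> : s + j.+1%:Z + l.+1%:Z = s + (l + j.+1).+1%:Z by lia.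
Qed.

End ReplacedPhiMatrix.

Theorem proposition5 (R : comNzRingType) (p : nat) (hp : (1 <= p)%N)
    (phi : nat -> int -> R) (v : int -> R) (t s : int) (hts : s < t) :
  \sum_(1 <= j < `|t - s|%N.+1) Hgreen p phi t (s + j%:Z) * v (s + j%:Z)
  = \det (Mrepl p phi v t s).
Proof.
have [n tsE] : exists n, `|t - s|%N = n.+1 by exists `|t - s|.-1; lia.
rewrite /Mrepl /PhiMat tsE.
have -> : t = s + n.+1%:Z by lia.
transitivity (\det (\matrix_(i < n.+1, j < n.+1) Mrepl_entry p phi v s i j)); last first.
  by congr (\det _); apply/matrixP => i j; rewrite !mxE.
rewrite (det_hessenberg (@Mrepl_entry_super _ p phi v s) (@Mrepl_entry_above _ p phi v s)
  (h := fun i => Hgreen p phi (s + n.+1%:Z) (s + i.+1%:Z))) ?Hgreen_id //; last first.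
  exact: Hgreen_Mrepl_col_rec.
by rewrite big_add1 big_mkord.
Qed.
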